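(* Let $\{\alpha_{n,m}\in k^\times:n\in\mathbb{Z},m\in\mathbb{N}\}$ be a family of nonzero scalars and let $\phi:H\to H$ be the linear map with $\phi(x^ny^m)=\alpha_{n,m}x^ny^m$ for all $n\in\mathbb{Z}$, $m\in\mathbb{N}$. Then $\phi$ is a coalgebra automorphism of $H$ if and only if $\alpha_{n,m}=\alpha_{n,i}\alpha_{n+i,m-i}$ for all $n\in\mathbb{Z}$, $m\in\mathbb{N}$ and $0\leq i\leq m$.
   Context: Let $k$ be a field and $0\neq q\in k$ not a root of unity. $H=k_q[x,x^{-1},y]$ is the $k$-algebra generated by $x,x^{-1},y$ with $xx^{-1}=x^{-1}x=1$, $yx=qxy$, a Hopf algebra with $\Delta(x)=x\otimes x$, $\Delta(x^{-1})=x^{-1}\otimes x^{-1}$, $\Delta(y)=y\otimes x+1\otimes y$, $\varepsilon(x)=1$, $\varepsilon(y)=0$; $\{x^ny^m:n\in\mathbb{Z},m\in\mathbb{N}\}$ is a $k$-basis, and $\Delta(x^ny^m)=\sum_{i=0}^m\binom{m}{i}_qx^ny^i\otimes x^{n+i}y^{m-i}$ with $q$-binomial coefficients $\binom{m}{i}_q$. *)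

From HB Require Import structures.
From mathcomp Require Import all_boot all_order all_algebra.
From mathcomp Require Import finmap.
Set Implicit Arguments. Unset Strict Implicit. Unset Printing Implicit Defensive.
Import Order.TTheory GRing.Theory Num.Theory.
Local Open Scope ring_scope.


Fixpoint qbinom (k : nzRingType) (q : k) (m i : nat) : k :=
  match m, i with
  | _, 0%N => 1
  | 0%N, _.+1 => 0
  | m'.+1, i'.+1 => qbinom q m' i' + q ^+ i'.+1 * qbinom q m' i'.+1
  end.

(* The underlying vector space of H = k_q[x, x^-1, y]: an element is the
   finitely supported family of its coordinates in the basis
   x^n y^m, indexed by (n, m) : int * nat. *)
Definition Hsp (k : fieldType) := {fsfun (int * nat) -> k with 0}.

Definition Hbas (k : fieldType) (p : int * nat) : Hsp k :=
  [fsfun x in [fset p]%fset => (1 : k)].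

(* Elements of H (x) H as formal finite sums  sum c * a (x) b ;
   interpreted by their coordinates on the basis x^n y^m (x) x^n' y^m'. *)
Definition Htens (k : fieldType) := seq (k * Hsp k * Hsp k).

Definition tcoord (k : fieldType) (t : Htens k) (pq : (int * nat) * (int * nat)) : k :=
  \sum_(u <- t) u.1.1 * u.1.2 pq.1 * u.2 pq.2.

Definition teq (k : fieldType) (t t' : Htens k) : Prop :=
  forall pq, tcoord t pq = tcoord t' pq.

Definition tmap (k : fieldType) (f g : Hsp k -> Hsp k) (t : Htens k) : Htens k :=
  [seq (u.1.1, f u.1.2, g u.2) | u <- t].

(* comultiplication, extended linearly from
   Delta(x^n y^m) = sum_(i=0..m) [m choose i]_q x^n y^i (x) x^(n+i) y^(m-i) *)
Definition Hcomul (k : fieldType) (q : k) (h : Hsp k) : Htens k :=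
  [seq (h r.1 * qbinom q r.1.2 r.2, Hbas k (r.1.1, r.2),
        Hbas k (r.1.1 + r.2%:Z, (r.1.2 - r.2)%N))
  | r <- [seq (r, i) | r <- finsupp h, i <- iota 0 r.2.+1]].

Definition Hcounit (k : fieldType) (h : Hsp k) : k :=
  \sum_(r <- finsupp h) h r * (r.2 == 0%N)%:R.

Definition coalg_map (k : fieldType) (q : k) (f : Hsp k -> Hsp k) : Prop :=
  (forall h, teq (Hcomul q (f h)) (tmap f f (Hcomul q h))) /\
  (forall h, Hcounit (f h) = Hcounit h).

Definition coalg_aut (k : fieldType) (q : k) (f : Hsp k -> Hsp k) : Prop :=
  bijective f /\ coalg_map q f.

Definition diagmap (k : fieldType) (alpha : int -> nat -> k) (h : Hsp k) : Hsp k :=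
  [fsfun p in finsupp h => alpha p.1 p.2 * h p].

From HB Require Import structures.
From mathcomp Require Import all_boot all_order all_algebra.
From mathcomp Require Import finmap.
From mathcomp Require Import ring zify.
Import Order.TTheory GRing.Theory Num.Theory.
Local Open Scope ring_scope.

(* Comparing the coefficients of x^n y^i (x) x^(n+i) y^(m-i) in
   Delta(phi(x^n y^m)) and (phi (x) phi)(Delta(x^n y^m)) gives
   alpha(n,m) [m,i]_q = alpha(n,i) alpha(n+i,m-i) [m,i]_q, and these are all
   the coordinates on which the two tensors can differ.  Since q is not a root
   of unity, [m,i]_q (1-q)...(1-q^i) = (1-q^m)...(1-q^(m-i+1)) is nonzero, so
   the comultiplicativity of phi is exactly the cocycle identity.  The case
   m = i = 0 of the identity gives alpha(n,0) = 1, i.e. phi preserves the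
   counit, and phi is invertible with inverse the diagonal map of the
   alpha(n,m)^-1. *)

Lemma qbinom_mul_prod {R : comNzRingType} (q : R) (m i : nat) :
  qbinom q m i * \prod_(j < i) (1 - q ^+ j.+1) =
  \prod_(j < i) (1 - q ^+ (m - j)).
Proof.
elim: m i => [|m IHm] [|i] /=; rewrite ?big_ord0 ?mulr1 //.
  by rewrite mul0r big_ord_recl subnn expr0 subrr mul0r.
rewrite big_ord_recr /= big_ord_recl /=.
under [X in _ = _ * X]eq_bigr => j _ do rewrite /bump /= add1n subSS.
rewrite subn0 mulrDl mulrA IHm -(mulrA (q ^+ i.+1)).
have := IHm i.+1; rewrite big_ord_recr /= => ->.
rewrite big_ord_recr /=.
have [le_im|lt_mi] := leqP i m.
  have -> : q ^+ m.+1 = q ^+ i.+1 * q ^+ (m - i).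
    by rewrite -exprD; congr (_ ^+ _); lia.
  ring.
have -> : \prod_(j < i) (1 - q ^+ (m - j)) = 0.
  by rewrite (bigD1 (Ordinal lt_mi)) //= subnn expr0 subrr mul0r.
ring.
Qed.

Lemma qbinom_neq0 {R : idomainType} (q : R) (m i : nat) :
  (forall n : nat, (0 < n)%N -> q ^+ n != 1) -> (i <= m)%N -> qbinom q m i != 0.
Proof.
move=> q_not_root le_im; apply/eqP => qbinom0.
have /esym/eqP := qbinom_mul_prod q m i; rewrite qbinom0 mul0r.
rewrite prodf_seq_eq0 => /hasP[j _ /=]; rewrite subr_eq0 eq_sym.
by apply/negP/q_not_root; have := ltn_ord j; lia.
Qed.

Lemma big_uniq_pred1 (R : nmodType) (T : eqType) (s : seq T) (x0 : T) (F : T -> R) :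
  uniq s -> (forall x, x != x0 -> F x = 0) ->
  \sum_(x <- s) F x = if x0 \in s then F x0 else 0.
Proof.
move=> uniq_s F0; case: ifP => s_x0.
  by rewrite (bigD1_seq x0) //= big1 ?addr0 // => x /F0.
by rewrite big1_seq // => x /andP[_ s_x]; apply/F0; apply: contraFneq s_x0 => <-.
Qed.

Section DiagonalMap.
Variable k : fieldType.
Implicit Types (h : Hsp k) (alpha : int -> nat -> k).

Lemma HbasE (p p' : int * nat) : Hbas k p p' = (p' == p)%:R.
Proof. by rewrite /Hbas fsfunE inE; case: eqP. Qed.

Lemma diagmapE alpha h p : diagmap alpha h p = alpha p.1 p.2 * h p.
Proof.
rewrite /diagmap fsfunE; case: ifP => // /negbT.
by rewrite memNfinsupp => /eqP ->; rewrite mulr0.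
Qed.

Lemma tcoord_tmap_diagmap alpha (t : Htens k) p p' :
  tcoord (tmap (diagmap alpha) (diagmap alpha) t) (p, p') =
  alpha p.1 p.2 * alpha p'.1 p'.2 * tcoord t (p, p').
Proof.
rewrite /tcoord /tmap big_map big_distrr; apply: eq_bigr => u _ /=.
rewrite !diagmapE; ring.
Qed.

Lemma sum_Hbas_tensorE (c : nat -> k) (r : int * nat) a i b j :
  \sum_(i' <- iota 0 r.2.+1)
     c i' * Hbas k (r.1, i') (a, i) * Hbas k (r.1 + i'%:Z, (r.2 - i')%N) (b, j) =
  (r == (a, (i + j)%N))%:R * (b == a + i%:Z)%:R * c i.
Proof.
case: r => n m; rewrite (@big_uniq_pred1 _ _ _ i _ (iota_uniq _ _)) => [|i' ne_i'i]; last first.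
  by rewrite !HbasE xpair_eqE (eq_sym i) (negbTE ne_i'i) andbF mulr0 mul0r.
rewrite mem_iota /= !HbasE !xpair_eqE eqxx andbT (eq_sym n).
case: (a =P n) => [->|_]; last by rewrite /= !mulr0 !mul0r; case: ifP.
rewrite /= add0n ltnS; have [le_im|lt_mi] := leqP i m.
  have -> : (j == m - i)%N = (m == i + j)%N by apply/eqP/eqP; lia.
  by case: (b == _); case: (m == _); rewrite ?mulr0 ?mul0r ?mulr1 ?mul1r.
by case: (m =P (i + j)%N) => [?|_]; [lia|rewrite !mul0r].
Qed.

Lemma tcoord_Hcomul (q : k) h a i b j :
  tcoord (Hcomul q h) ((a, i), (b, j)) =
  (b == a + i%:Z)%:R * h (a, (i + j)%N) * qbinom q (i + j) i.
Proof.
rewrite /tcoord /Hcomul big_map big_allpairs_dep /=.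
under eq_bigr => r _ do rewrite sum_Hbas_tensorE.
rewrite (@big_uniq_pred1 _ _ _ (a, (i + j)%N) _ (fset_uniq _)) => [|r /negbTE->]; last first.
  by rewrite !mul0r.
rewrite eqxx mul1r mulrA; case: ifP => // /negbT.
by rewrite memNfinsupp => /eqP->; rewrite mulr0 mul0r.
Qed.

Section Cocycle.
Variable alpha : int -> nat -> k.
Hypothesis alpha_neq0 : forall n m, alpha n m != 0.

Lemma diagmap_bij : bijective (diagmap alpha).
Proof.
exists (diagmap (fun n m => (alpha n m)^-1)) => h; apply/fsfunP => p;
  by rewrite !diagmapE mulrA ?mulVf ?mulfV ?mul1r.
Qed.

Lemma finsupp_diagmap h : finsupp (diagmap alpha h) = finsupp h.
Proof.
by apply/fsetP => p; rewrite !mem_finsupp diagmapE mulf_eq0 negb_or alpha_neq0.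
Qed.

Lemma Hcounit_diagmap h :
  (forall n, alpha n 0%N = 1) -> Hcounit (diagmap alpha h) = Hcounit h.
Proof.
move=> alpha_n0; rewrite /Hcounit finsupp_diagmap.
by apply: eq_bigr => -[n [|m]] _; rewrite diagmapE ?alpha_n0 ?mul1r // !mulr0.
Qed.

Lemma Hcomul_diagmap (q : k) h :
  (forall n m i, (i <= m)%N -> alpha n m = alpha n i * alpha (n + i%:Z) (m - i)%N) ->
  teq (Hcomul q (diagmap alpha h)) (tmap (diagmap alpha) (diagmap alpha) (Hcomul q h)).
Proof.
move=> alpha_mul [[a i] [b j]]; rewrite tcoord_tmap_diagmap !tcoord_Hcomul diagmapE /=.
have [->|_] := eqVneq b (a + i%:Z); last by rewrite !mul0r mulr0.
by rewrite (alpha_mul a (i + j)%N i) ?leq_addr // addKn; ring.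
Qed.

Lemma diagmap_mul_of_Hcomul (q : k) :
  (forall n : nat, (0 < n)%N -> q ^+ n != 1) ->
  (forall h, teq (Hcomul q (diagmap alpha h))
                 (tmap (diagmap alpha) (diagmap alpha) (Hcomul q h))) ->
  forall n m i, (i <= m)%N -> alpha n m = alpha n i * alpha (n + i%:Z) (m - i)%N.
Proof.
move=> q_not_root comul_diagmap n m i le_im.
have := comul_diagmap (Hbas k (n, m)) ((n, i), (n + i%:Z, (m - i)%N)).
rewrite tcoord_tmap_diagmap !tcoord_Hcomul subnKC // diagmapE !HbasE !eqxx /=.
rewrite !mulr1 !mul1r => /mulIf; apply; exact: qbinom_neq0.
Qed.

End Cocycle.
End DiagonalMap.

Theorem lemma2p11 (k : fieldType) (q : k) (hq0 : q != 0)
  (hq : forall n : nat, (0 < n)%N -> q ^+ n != 1)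
  (alpha : int -> nat -> k) (halpha : forall n m, alpha n m != 0) :
  coalg_aut q (diagmap alpha) <->
  (forall (n : int) (m i : nat), (i <= m)%N ->
     alpha n m = alpha n i * alpha (n + i%:Z) (m - i)%N).
Proof.
split=> [[_ [comul_diagmap _]]|alpha_mul].
  exact: diagmap_mul_of_Hcomul hq comul_diagmap.
have alpha_n0 n : alpha n 0%N = 1.
  apply: (mulfI (halpha n 0%N)); rewrite mulr1.
  by have := alpha_mul n 0%N 0%N (leqnn 0); rewrite addr0 subnn.
split; first exact: diagmap_bij.
by split=> h; [apply: Hcomul_diagmap | apply: Hcounit_diagmap].
Qed.
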